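(* Let $(\mathsf P,\mathcal O)$ be a semitopology. The following are equivalent: (1) every point $p\in\mathsf P$ is regular; (2) $\mathsf P$ partitions into topen sets: there is a set $\mathcal T$ of pairwise disjoint topen sets with $\bigcup\mathcal T=\mathsf P$; (3) every $X\subseteq\mathsf P$ has a cover by topen sets: there is a set $\mathcal T$ of topen sets with $X\subseteq\bigcup\mathcal T$.
   Context: A semitopology is a pair $(\mathsf P,\mathcal O)$ where $\mathsf P$ is a set and $\mathcal O\subseteq\mathcal P(\mathsf P)$ contains $\varnothing$ and $\mathsf P$ and is closed under arbitrary unions. Write $X\between Y$ when $X\cap Y\neq\varnothing$. A set $T$ is transitive when for all $O,O'\in\mathcal O$, $O\between T\between O'$ implies $O\between O'$; topen means nonempty, open and transitive. Points $p,p'$ are intertwined when every open set containing $p$ intersects every open set containing $p'$; $I(p)$ is the set of points intertwined with $p$; $K(p)=\mathrm{int}(I(p))$ (the union of all open subsets of $I(p)$) is the community of $p$. A point $p$ is regular when $p\in K(p)$ and $K(p)$ is topen. *)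

Set Implicit Arguments.

Definition set (P : Type) := P -> Prop.

Record semitopology (P : Type) := {
  opn : set P -> Prop;
  opn_empty : opn (fun _ => False);
  opn_full : opn (fun _ => True);
  opn_union : forall (F : set P -> Prop),
      (forall O, F O -> opn O) -> opn (fun x => exists O, F O /\ O x)
}.

Section Defs.
Context {P : Type} (S : semitopology P).

Definition between (X Y : set P) : Prop := exists x, X x /\ Y x.

Definition subset (X Y : set P) : Prop := forall x, X x -> Y x.

Definition transitive (T : set P) : Prop :=
  forall O O', opn S O -> opn S O' -> between O T -> between T O' -> between O O'.

Definition topen (T : set P) : Prop :=
  (exists x, T x) /\ opn S T /\ transitive T.

Definition intertwined (p p' : P) : Prop :=
  forall O O', opn S O -> opn S O' -> O p -> O' p' -> between O O'.

Definition I (p : P) : set P := fun p' => intertwined p p'.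

Definition interior (X : set P) : set P :=
  fun x => exists O, opn S O /\ subset O X /\ O x.

Definition K (p : P) : set P := interior (I p).

Definition regular (p : P) : Prop := K p p /\ topen (K p).

Definition bigcup (T : set P -> Prop) : set P := fun x => exists X, T X /\ X x.

End Defs.

From Stdlib Require Import FunctionalExtensionality PropExtensionality.

(* The key fact is that a topen set T is contained in the community K p of each
   of its points p: points of an open transitive set are pairwise intertwined,
   so T is an open subset of I p.  Consequently any point lying in some topen T
   is regular: K p is open (as an interior), contains p, and inherits
   transitivity from T.  For regular points the communities form a partition:
   two communities that meet coincide. *)

Section Communities.
Context {P : Type} (S : semitopology P).

Lemma transitive_open_intertwined (T : set P) (p q : P) :
  opn S T -> transitive S T -> T p -> T q -> intertwined S p q.
Proof.
  intros T_open T_trans Tp Tq O O' O_open O'_open Op O'q.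
  apply (T_trans O O' O_open O'_open); [exists p | exists q]; auto.
Qed.

Lemma topen_sub_community (T : set P) (p : P) :
  topen S T -> T p -> subset T (K S p).
Proof.
  intros [_ [T_open T_trans]] Tp x Tx.
  exists T; repeat split; auto.
  intros y Ty; exact (transitive_open_intertwined T p y T_open T_trans Tp Ty).
Qed.

(* The interior of any set is open, being the union of its open subsets. *)
Lemma interior_open (X : set P) : opn S (interior S X).
Proof.
  assert (union_eq : (fun x => exists O, (opn S O /\ subset O X) /\ O x)
                     = interior S X).
  { apply functional_extensionality; intro x; apply propositional_extensionality.
    split; [intros [O [[? ?] ?]] | intros [O [? [? ?]]]]; exists O; auto. }
  rewrite <- union_eq.
  apply opn_union; intros O [O_open _]; exact O_open.
Qed.

(* If p lies in a topen T, then its community is transitive: every point of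
   K p is intertwined with p, so opens meeting K p meet T. *)
Lemma community_transitive (T : set P) (p : P) :
  topen S T -> T p -> transitive S (K S p).
Proof.
  intros [_ [T_open T_trans]] Tp O O' O_open O'_open [z [Oz Kz]] [w [Kw O'w]].
  destruct Kz as [U [_ [U_sub Uz]]]; destruct Kw as [W [_ [W_sub Ww]]].
  apply (T_trans O O' O_open O'_open).
  - destruct (U_sub z Uz T O T_open O_open Tp Oz) as [u [Tu Ou]].
    exists u; auto.
  - exact (W_sub w Ww T O' T_open O'_open Tp O'w).
Qed.

Lemma regular_of_topen (T : set P) (p : P) : topen S T -> T p -> regular S p.
Proof.
  intros T_topen Tp.
  assert (Kp : K S p p) by exact (topen_sub_community T p T_topen Tp p Tp).
  split; [exact Kp |].
  split; [exists p; exact Kp | split].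
  - apply interior_open.
  - exact (community_transitive T p T_topen Tp).
Qed.

Lemma subset_antisym (X Y : set P) : subset X Y -> subset Y X -> X = Y.
Proof.
  intros XY YX; apply functional_extensionality; intro x.
  apply propositional_extensionality; split; auto.
Qed.

Lemma community_of_member (p q : P) : regular S p -> K S p q -> K S q = K S p.
Proof.
  intros [Kp Kp_topen] Kq.
  assert (q_regular : regular S q) by exact (regular_of_topen _ q Kp_topen Kq).
  assert (p_sub_q : subset (K S p) (K S q))
    by exact (topen_sub_community _ q Kp_topen Kq).
  apply subset_antisym; [| exact p_sub_q].
  exact (topen_sub_community _ p (proj2 q_regular) (p_sub_q p Kp)).
Qed.

Lemma communities_meet_eq (p q : P) :
  regular S p -> regular S q -> between (K S p) (K S q) -> K S p = K S q.
Proof.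
  intros p_regular q_regular [x [Kpx Kqx]].
  rewrite <- (community_of_member p x p_regular Kpx).
  exact (community_of_member q x q_regular Kqx).
Qed.

Definition topen_partition (T : set P -> Prop) : Prop :=
  (forall X, T X -> topen S X) /\
  (forall X Y, T X -> T Y -> X <> Y -> ~ between X Y) /\
  (forall x : P, bigcup T x).

Definition topen_cover (X : set P) (T : set P -> Prop) : Prop :=
  (forall Y, T Y -> topen S Y) /\ subset X (bigcup T).

Lemma regular_topen_partition :
  (forall p, regular S p) -> exists T, topen_partition T.
Proof.
  intros all_regular; exists (fun X => exists p, X = K S p).
  split; [| split].
  - intros X [p ->]; exact (proj2 (all_regular p)).
  - intros X Y [p ->] [q ->] neq meet.
    exact (neq (communities_meet_eq p q (all_regular p) (all_regular q) meet)).
  - intros x; exists (K S x); split; [exists x; reflexivity | exact (proj1 (all_regular x))].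
Qed.

Lemma partition_topen_cover (T : set P -> Prop) :
  topen_partition T -> forall X, topen_cover X T.
Proof.
  intros [T_topen [_ T_covers]] X; split; [exact T_topen |].
  intros x _; apply T_covers.
Qed.

Lemma topen_cover_regular (T : set P -> Prop) :
  topen_cover (fun _ => True) T -> forall p, regular S p.
Proof.
  intros [T_topen T_covers] p.
  destruct (T_covers p Logic.I) as [Y [TY Yp]].
  exact (regular_of_topen Y p (T_topen Y TY) Yp).
Qed.

End Communities.

Theorem corollary4p19 (P : Type) (S : semitopology P) :
  ((forall p : P, regular S p) <->
   (exists T : set P -> Prop,
      (forall X, T X -> topen S X) /\
      (forall X Y, T X -> T Y -> X <> Y -> ~ between X Y) /\
      (forall x : P, bigcup T x)))
  /\
  ((exists T : set P -> Prop,
      (forall X, T X -> topen S X) /\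
      (forall X Y, T X -> T Y -> X <> Y -> ~ between X Y) /\
      (forall x : P, bigcup T x)) <->
   (forall X : set P, exists T : set P -> Prop,
      (forall Y, T Y -> topen S Y) /\ subset X (bigcup T))).
Proof.
  assert (partition_of_regular := regular_topen_partition S).
  assert (regular_of_partition :
            (exists T, topen_partition S T) -> forall p, regular S p).
  { intros [T T_partition].
    exact (topen_cover_regular S T (partition_topen_cover S T T_partition _)). }
  assert (cover_of_partition :
            (exists T, topen_partition S T) -> forall X, exists T, topen_cover S X T).
  { intros [T T_partition] X; exists T; exact (partition_topen_cover S T T_partition X). }
  assert (partition_of_cover :
            (forall X, exists T, topen_cover S X T) -> exists T, topen_partition S T).
  { intros covers; apply partition_of_regular.
    destruct (covers (fun _ => True)) as [T T_cover].
    exact (topen_cover_regular S T T_cover). }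
  split; split; assumption.
Qed.
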